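(* Let $\mathcal{A}$ be a synchronizing automaton with Wedderburn–Artin components indexed by $[1,k]$ as in the context. Then $\mathrm{Fr}(\mathcal{A})\le\min\{\mathrm{Rnk}(\mathcal{I}_i): i\in[1,k]\}$. Moreover, if $\mathrm{Fs}(\mathcal{A})\setminus\mathrm{Rad}(\mathcal{A})\neq\emptyset$, then $\min\{\mathrm{Rnk}(\mathcal{I}_i): i\in[1,k]\}=\mathrm{Fr}(\mathcal{A})$.
   Context: Let $\mathcal{A}=\langle Q,\Sigma,\delta\rangle$ be a synchronizing automaton with state set $Q=\{q_1,\dots,q_n\}$ and finite alphabet $\Sigma$; write $q\cdot u$ for the action of $u\in\Sigma^*$, extended to subsets. A word $u$ is reset if $|Q\cdot u|=1$; $\mathrm{Syn}(\mathcal{A})$ is the set of reset words. The rank of a word is $\mathrm{rk}(u)=|Q\cdot u|$. Each word $u$ acts linearly on $\mathbb{C}Q$ by $q\mapsto q\cdot u$, preserving $w^\perp=\{x:\langle x,w\rangle=0\}$ with $w=q_1+\dots+q_n$; $u$ is reset iff it acts as $0$ on $w^\perp$. Let $\rho:\Sigma^*\to\mathbb{M}_{n-1}(\mathbb{C})\cong\mathrm{End}(w^\perp)$ be the induced representation, $\mathcal{R}$ the $\mathbb{C}$-algebra generated by $\rho(\Sigma^* )$, and $\mathrm{Rad}(\mathcal{A})=\rho^{-1}(\mathrm{Rad}(\mathcal{R}))$ the set of radical words (Jacobson radical). By Wedderburn–Artin, $\mathcal{R}/\mathrm{Rad}(\mathcal{R})\cong\mathbb{M}_{n_1}(\mathbb{C})\times\dots\times\mathbb{M}_{n_k}(\mathbb{C})$;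 let $\psi:\mathcal{R}\to\mathcal{R}/\mathrm{Rad}(\mathcal{R})$ be the quotient map, $\varphi_i$ the projection onto the $i$-th factor, and $\theta_i=\varphi_i\circ\psi\circ\rho:\Sigma^*\to\mathbb{M}_{n_i}(\mathbb{C})$, with $0_i$ the zero matrix. A word $u$ is radical iff $\theta_i(u)=0_i$ for all $i$. The monoid $\mathcal{M}_i=\theta_i(\Sigma^* )$ has a unique $0$-minimal ideal $\mathcal{I}_i$. For $g\in\mathcal{I}_i\setminus\{0_i\}$ put $\mathrm{Rnk}_i(g)=\min\{\mathrm{rk}(u):\theta_i(u)=g\}$ and $\mathrm{Rnk}(\mathcal{I}_i)=\min\{\mathrm{Rnk}_i(g): g\in\mathcal{I}_i\setminus\{0_i\}\}$. The former-rank is $\mathrm{Fr}(\mathcal{A})=\min\{|Q\cdot u|:u\in\Sigma^*\setminus\mathrm{Syn}(\mathcal{A})\}$ and the set of former-synchronizing words is $\mathrm{Fs}(\mathcal{A})=\{u\in\Sigma^*:|Q\cdot u|=\mathrm{Fr}(\mathcal{A})\}$. *)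

From HB Require Import structures.
From mathcomp Require Import all_boot all_order all_algebra.
From mathcomp Require Import algC.
From Stdlib Require Import ClassicalEpsilon.

Set Implicit Arguments.
Unset Strict Implicit.
Unset Printing Implicit Defensive.

Import GRing.Theory.
Local Open Scope ring_scope.

(* Minimum of a set of naturals (meaningful when the set is nonempty). *)
Definition natmin (P : nat -> Prop) : nat :=
  epsilon (inhabits 0%N) (fun m => P m /\ forall j, P j -> (m <= j)%N).

Section Auto.
Variables (n : nat) (Sigma : finType) (delta : 'I_n.+1 -> Sigma -> 'I_n.+1).

Definition act (q : 'I_n.+1) (u : seq Sigma) : 'I_n.+1 := foldl delta q u.
Definition img (u : seq Sigma) : {set 'I_n.+1} := [set act q u | q : 'I_n.+1].
Definition rk (u : seq Sigma) : nat := #|img u|.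
Definition is_reset (u : seq Sigma) : Prop := rk u = 1%N.
Definition synchronizing : Prop := exists u, is_reset u.

(* rho u : matrix of the action of u on w^perp, in the basis
   b_i = q_(lift ord_max i) - q_ord_max (i < n), row-vector convention
   (x |-> x *m rho u), so that rho (u ++ v) = rho u *m rho v. *)
Definition rho (u : seq Sigma) : 'M[algC]_n :=
  \matrix_(i, j) (((act (lift ord_max i) u == lift ord_max j)%:R : algC)
                  - (act ord_max u == lift ord_max j)%:R).

Definition mx_subalg (S : 'M[algC]_n -> Prop) : Prop :=
  [/\ S 1%:M,
      (forall A B, S A -> S B -> S (A + B)),
      (forall (c : algC) A, S A -> S (c *: A)) &
      (forall A B, S A -> S B -> S (A *m B))].

Definition Ralg (A : 'M[algC]_n) : Prop :=
  forall S, mx_subalg S -> (forall u, S (rho u)) -> S A.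

Definition left_ideal (R L : 'M[algC]_n -> Prop) : Prop :=
  [/\ (forall x, L x -> R x), L 0,
      (forall x y, L x -> L y -> L (x - y)) &
      (forall a x, R a -> L x -> L (a *m x))].

Definition max_left_ideal (R L : 'M[algC]_n -> Prop) : Prop :=
  [/\ left_ideal R L, ~ (forall x, R x -> L x) &
      (forall L', left_ideal R L' -> (forall x, L x -> L' x) ->
         ~ (forall x, R x -> L' x) -> forall x, L' x -> L x)].

Definition JRad (R : 'M[algC]_n -> Prop) (x : 'M[algC]_n) : Prop :=
  R x /\ forall L, max_left_ideal R L -> L x.

Definition radical_word (u : seq Sigma) : Prop := JRad Ralg (rho u).

(* Wedderburn-Artin data: psi = (phi_i)_i : R -> prod_i M_(d i)(C) is a
   surjective unital algebra morphism with kernel Rad(R), i.e. it induces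
   R / Rad(R) ~= M_(d 0)(C) x ... x M_(d (k-1))(C). *)
Definition WA_decomp (k : nat) (d : 'I_k -> nat)
    (phi : forall i : 'I_k, 'M[algC]_n -> 'M[algC]_(d i)) : Prop :=
  (forall i, 0 < d i)%N /\
  [/\ (forall i (c : algC) A B, Ralg A -> Ralg B ->
          phi i (c *: A + B) = c *: phi i A + phi i B),
      (forall i A B, Ralg A -> Ralg B -> phi i (A *m B) = phi i A *m phi i B),
      (forall i, phi i 1%:M = 1%:M),
      (forall g : forall i, 'M[algC]_(d i),
          exists A, Ralg A /\ forall i, phi i A = g i) &
      (forall A, Ralg A -> ((forall i, phi i A = 0) <-> JRad Ralg A))].

Definition theta (k : nat) (d : 'I_k -> nat)
    (phi : forall i : 'I_k, 'M[algC]_n -> 'M[algC]_(d i)) (i : 'I_k)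
    (u : seq Sigma) : 'M[algC]_(d i) := phi i (rho u).

Definition theta_monoid (k : nat) (d : 'I_k -> nat)
    (phi : forall i : 'I_k, 'M[algC]_n -> 'M[algC]_(d i)) (i : 'I_k)
    (g : 'M[algC]_(d i)) : Prop := exists u, theta phi i u = g.

Definition Rnk_i (k : nat) (d : 'I_k -> nat)
    (phi : forall i : 'I_k, 'M[algC]_n -> 'M[algC]_(d i)) (i : 'I_k)
    (g : 'M[algC]_(d i)) : nat :=
  natmin (fun r => exists u, theta phi i u = g /\ rk u = r).

Definition RnkI (k : nat) (d : 'I_k -> nat)
    (phi : forall i : 'I_k, 'M[algC]_n -> 'M[algC]_(d i)) (i : 'I_k)
    (I : 'M[algC]_(d i) -> Prop) : nat :=
  natmin (fun r => exists g, [/\ I g, g <> 0 & Rnk_i phi g = r]).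

Definition minRnk (k : nat) (d : 'I_k -> nat)
    (phi : forall i : 'I_k, 'M[algC]_n -> 'M[algC]_(d i))
    (I : forall i : 'I_k, 'M[algC]_(d i) -> Prop) : nat :=
  natmin (fun r => exists i, RnkI phi (I i) = r).

Definition Fr : nat := natmin (fun r => exists u, ~ is_reset u /\ rk u = r).
Definition Fs (u : seq Sigma) : Prop := rk u = Fr.

End Auto.

Definition mon_ideal (m : nat) (M J : 'M[algC]_m -> Prop) : Prop :=
  [/\ (exists g, J g), (forall g, J g -> M g) &
      (forall a b g, M a -> M b -> J g -> J (a *m g *m b))].

Definition zero_minimal_ideal (m : nat) (M J : 'M[algC]_m -> Prop) : Prop :=
  [/\ mon_ideal M J, (exists g, J g /\ g <> 0) &
      (forall J', mon_ideal M J' -> (forall g, J' g -> J g) ->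
         (forall g, J' g -> g = 0) \/ (forall g, J g -> J' g))].

Arguments theta_monoid {n Sigma} delta {k d} phi i g.
Arguments Rnk_i {n Sigma} delta {k d} phi i g.
Arguments RnkI {n Sigma} delta {k d} phi i I.
Arguments theta {n Sigma} delta {k d} phi i u.

From Pilot Require Import Defs.
From HB Require Import structures.
From mathcomp Require Import all_boot all_order all_algebra.
From mathcomp Require Import algC.
From Stdlib Require Import Classical ClassicalEpsilon Wf_nat.

Set Implicit Arguments.
Unset Strict Implicit.
Unset Printing Implicit Defensive.
Import GRing.Theory.
Local Open Scope ring_scope.

(** Reset words act as [0], so every nonzero element of a 0-minimal ideal
    [I_i] is [theta_i w] for a non-reset word [w]: hence [Fr <= Rnk(I_i)].
    Conversely, let [u] be former-synchronizing with [theta_i u <> 0].  As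
    [theta_i(Sigma^* )] spans the prime ring [M_(d_i)(C)], for a nonzero
    [h = theta_i v] in [I_i] there are words [b], [c] with
    [h (theta_i b) (theta_i u) (theta_i c) h <> 0]; this is [theta_i] of the
    word [v b u c v], a nonzero element of [I_i] of rank at most
    [rk u = Fr].  That [k > 0] follows from [1] not being radical: a proper
    left ideal of maximal dimension is a maximal left ideal. *)

Lemma natmin_spec (P : nat -> Prop) :
  (exists j, P j) -> P (natmin P) /\ forall j, P j -> (natmin P <= j)%N.
Proof.
move=> exP.
apply: (epsilon_spec _ (fun m => P m /\ forall j, P j -> (m <= j)%N)).
have [m [[Pm minm] _]] :=
  dec_inh_nat_subset_has_unique_least_element P (fun j => classic (P j)) exP.
by exists m; split=> // j /minm /leP.
Qed.

Lemma natminP (P : nat -> Prop) : (exists j, P j) -> P (natmin P).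
Proof. by case/natmin_spec. Qed.

Lemma natmin_le (P : nat -> Prop) j : P j -> (natmin P <= j)%N.
Proof. by move=> Pj; apply: (natmin_spec (ex_intro P j Pj)).2. Qed.

Section ClosedRowSpace.
Variables (F : fieldType) (m : nat) (S : 'rV[F]_m -> Prop).
Hypotheses (S0 : S 0) (SD : forall u v, S u -> S v -> S (u + v))
           (SZ : forall c u, S u -> S (c *: u)).

Lemma sub_rows_closed r (A : 'M[F]_(r, m)) v :
  (forall i, S (row i A)) -> (v <= A)%MS -> S v.
Proof.
move=> SA /submxP [w ->]; rewrite mulmx_sum_row.
by apply: big_ind => // i _; apply: SZ.
Qed.

Lemma closed_rowspace : exists B : 'M[F]_m, forall v, S v <-> (v <= B)%MS.
Proof.
pose P r := exists B : 'M[F]_m, (forall i, S (row i B)) /\ (m - \rank B)%N = r.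
have exP : exists r, P r.
  by exists (m - \rank (0%R : 'M[F]_m))%N, 0; split=> // i; rewrite row0.
have [[B [SB <-]] minB] := natmin_spec exP.
exists B => v; split; last exact: sub_rows_closed.
move=> Sv; apply: contraT => vB.
have SBv i : S (row i (B + v)%MS).
  have /sub_addsmxP [[w1 w2] ->] := row_sub i (B + v)%MS.
  apply: SD; first exact: sub_rows_closed SB (submxMl w1 B).
  by apply: sub_rows_closed (submxMl w2 v) => j; rewrite row_id.
have ltB : (\rank B < \rank (B + v)%MS)%N.
  rewrite rank_ltmx // ltmxE addsmxSl /=.
  by apply: contra vB; apply: submx_trans (addsmxSr B v).
have := minB _ (ex_intro _ _ (conj SBv erefl)).
by rewrite leqNgt ltn_sub2lE ?ltB // rank_leq_col.
Qed.

End ClosedRowSpace.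

Lemma mul_delta_entry (R : pzSemiRingType) m (A M : 'M[R]_m) q r i j :
  (A *m delta_mx q r *m M) i j = A i q * M r j.
Proof.
rewrite -(mul_delta_mx (0 : 'I_1)) mulmxA -colE -mulmxA -rowE mxE big_ord1.
by rewrite !mxE.
Qed.

Lemma mx_prime (R : idomainType) m (X Y : 'M[R]_m) :
  X != 0 -> Y != 0 -> exists B, X *m B *m Y != 0.
Proof.
move=> /matrix0Pn [p [q Xpq]] /matrix0Pn [r [s Yrs]].
exists (delta_mx q r); apply/matrix0Pn; exists p, s.
by rewrite mul_delta_entry mulf_neq0.
Qed.

Section Automaton.
Variables (n : nat) (Sigma : finType) (delta : 'I_n.+1 -> Sigma -> 'I_n.+1).

Local Notation act := (act delta).
Local Notation rho := (rho delta).
Local Notation Ralg := (Ralg delta).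
Local Notation rk := (rk delta).

Lemma act_cat q u v : act q (u ++ v) = act (act q u) v.
Proof. by rewrite /act foldl_cat. Qed.

Lemma rho_nil : rho [::] = 1%:M.
Proof.
apply/matrixP => i j; rewrite !mxE /Defs.act /=.
by rewrite (inj_eq lift_inj) eq_sym (negbTE (neq_lift _ _)) subr0.
Qed.

Lemma sum_lift_max (a : 'I_n.+1) (G : 'I_n.+1 -> algC) :
  \sum_(l < n) (a == lift ord_max l)%:R * (G (lift ord_max l) - G ord_max)
  = G a - G ord_max.
Proof.
have -> : G a - G ord_max = \sum_(x < n.+1) (a == x)%:R * (G x - G ord_max).
  rewrite (bigD1 a) //= eqxx mul1r big1 ?addr0 // => x.
  by rewrite eq_sym => /negbTE ->; rewrite mul0r.
rewrite big_ord_recr /= subrr mulr0 addr0.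
apply: eq_bigr => l _.
by have -> : lift ord_max l = widen_ord (leqnSn n) l by exact/val_inj/lift_max.
Qed.

Lemma rho_cat u v : rho (u ++ v) = rho u *m rho v.
Proof.
apply/matrixP => i j; rewrite !mxE.
under eq_bigr do rewrite !mxE mulrBl.
pose G x := ((act x v == lift ord_max j)%:R : algC).
by rewrite sumrB (sum_lift_max _ G) (sum_lift_max _ G) !act_cat opprB addrA subrK.
Qed.

Lemma rho_reset u : is_reset delta u -> rho u = 0.
Proof.
move=> /eqP /cards1P [x img_u].
have act_u q : act q u = x by apply/set1P; rewrite -img_u; apply: imset_f.
by apply/matrixP => i j; rewrite !mxE !act_u subrr.
Qed.

Lemma img_cat u v : img delta (u ++ v) = [set act q v | q in img delta u].
Proof. by rewrite /img -imset_comp; apply: eq_imset => q /=; rewrite act_cat. Qed.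

Lemma rk_catr u v : (rk (u ++ v) <= rk u)%N.
Proof. by rewrite /Defs.rk img_cat leq_imset_card. Qed.

Lemma rk_catl u v : (rk (u ++ v) <= rk v)%N.
Proof.
apply/subset_leq_card/subsetP => _ /imsetP [q _ ->].
by rewrite act_cat imset_f.
Qed.

Lemma rk_infix x u y : (rk (x ++ u ++ y) <= rk u)%N.
Proof. exact: leq_trans (rk_catl x (u ++ y)) (rk_catr u y). Qed.

Lemma Fr_le_rk u : ~ is_reset delta u -> (Fr delta <= rk u)%N.
Proof. by move=> u_nreset; apply: natmin_le; exists u. Qed.

Lemma Ralg_rho u : Ralg (rho u).
Proof. by move=> S _; apply. Qed.

Lemma Ralg_subalg : mx_subalg Ralg.
Proof.
split=> [S [] // | A B RA RB S subS Srho | c A RA S subS Srho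
         | A B RA RB S subS Srho]; case: (subS) => _ SD SZ SM.
- exact: SD (RA S subS Srho) (RB S subS Srho).
- exact: SZ (RA S subS Srho).
- exact: SM (RA S subS Srho) (RB S subS Srho).
Qed.

Lemma Ralg1 : Ralg 1%:M.
Proof. by case: Ralg_subalg. Qed.

Lemma RalgD A B : Ralg A -> Ralg B -> Ralg (A + B).
Proof. by case: Ralg_subalg => _ SD _ _; apply: SD. Qed.

Lemma RalgZ c A : Ralg A -> Ralg (c *: A).
Proof. by case: Ralg_subalg => _ _ SZ _; apply: SZ. Qed.

Lemma RalgM A B : Ralg A -> Ralg B -> Ralg (A *m B).
Proof. by case: Ralg_subalg => _ _ _ SM; apply: SM. Qed.

Lemma Ralg_scalar c : Ralg c%:M.
Proof. by rewrite -scalemx1; apply: RalgZ; exact: Ralg1. Qed.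

Lemma Ralg0 : Ralg 0.
Proof. by have := Ralg_scalar 0; rewrite raddf0. Qed.

Section RalgSpan.
Variable V : lmodType algC.

Definition linear_on_Ralg (F : 'M[algC]_n -> V) :=
  forall c A B, Ralg A -> Ralg B -> F (c *: A + B) = c *: F A + F B.

Lemma linear_on_Ralg0 F : linear_on_Ralg F -> F 0 = 0.
Proof.
move=> linF; have := linF (-1) 0 0 Ralg0 Ralg0.
by rewrite scaler0 addr0 scaleN1r addNr.
Qed.

(** That is, [R] is spanned by [rho(Sigma^* )].  The induction quantifies over
    all such [F] so that a product can be handled one factor at a time. *)
Lemma Ralg_span (F : 'M[algC]_n -> V) : linear_on_Ralg F ->
  (forall u, F (rho u) = 0) -> forall A, Ralg A -> F A = 0.
Proof.
pose S A := Ralg A /\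
  forall F, linear_on_Ralg F -> (forall u, F (rho u) = 0) -> F A = 0.
suff SR : forall A, Ralg A -> S A by move=> linF Frho A /SR [_]; apply.
move=> A0; apply; last by move=> u; split=> [|G _]; [exact: Ralg_rho | apply].
split.
- by split=> [|G _ Grho]; [exact: Ralg1 | rewrite -rho_nil].
- move=> A B [RA SA] [RB SB]; split=> [|G linG Grho]; first exact: RalgD.
  by rewrite -[A]scale1r linG // SA ?SB // scaler0 addr0.
- move=> c A [RA SA]; split=> [|G linG Grho]; first exact: RalgZ.
  rewrite -[c *: A]addr0 linG ?SA ?scaler0 ?linear_on_Ralg0 ?addr0 //.
  exact: Ralg0.
- move=> A B [RA SA] [RB SB]; split=> [|G linG Grho]; first exact: RalgM.
  apply: (SA (fun X => G (X *m B))) => [c X Y RX RY | w].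
    by rewrite mulmxDl -scalemxAl linG //; apply: RalgM.
  apply: (SB (fun Y => G (rho w *m Y))) => [c X Y RX RY | v].
    by rewrite mulmxDr -scalemxAr linG //; apply: RalgM => //; exact: Ralg_rho.
  by rewrite -rho_cat Grho.
Qed.

End RalgSpan.

Lemma left_ideal_rowspace L : left_ideal Ralg L ->
  exists B : 'M[algC]_(n * n), forall x, L x <-> (mxvec x <= B)%MS.
Proof.
case=> _ L0 LB LM.
have LN x : L x -> L (- x) by move=> Lx; rewrite -sub0r; apply: LB.
have [|u v Lu Lv|c u Lu|B LBmx] := @closed_rowspace _ _ (fun v => L (vec_mx v)).
- by rewrite /= raddf0.
- by have := LB _ _ Lu (LN _ Lv); rewrite /= opprK raddfD.
- by rewrite /= linearZ /= -mul_scalar_mx; apply: LM => //; exact: Ralg_scalar.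
- by exists B => x; rewrite -LBmx mxvecK.
Qed.

Lemma left_ideal_full L :
  left_ideal Ralg L -> L 1%:M -> forall x, Ralg x -> L x.
Proof. by case=> _ _ _ LM L1 x Rx; rewrite -[x]mulmx1; apply: LM. Qed.

Lemma JRad_neq1 : (0 < n)%N -> ~ JRad Ralg 1%:M.
Proof.
move=> n_gt0 [_ JR1].
pose P r := exists L (B : 'M[algC]_(n * n)),
  [/\ left_ideal Ralg L, ~ L 1%:M, forall x, L x <-> (mxvec x <= B)%MS
    & (n * n - \rank B)%N = r].
have exP : exists r, P r.
  have idL0 : left_ideal Ralg (fun x => x = 0).
    split=> [x -> | | x y -> -> | a x _ ->]; rewrite ?subr0 ?mulmx0 //.
    exact: Ralg0.
  have [B LB] := left_ideal_rowspace idL0.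
  exists (n * n - \rank B)%N, (fun x => x = 0), B; split=> //.
  pose i0 := Ordinal n_gt0.
  by move/matrixP/(_ i0 i0)/eqP; rewrite !mxE eqxx oner_eq0.
have [[L [B [idL L1 LB <-]]] minL] := natmin_spec exP.
apply: (L1); apply: JR1; split=> // [L_full | L' idL' sLL' L'_proper x L'x].
  by apply: L1; apply: L_full; exact: Ralg1.
have [B' LB'] := left_ideal_rowspace idL'.
have L'1 : ~ L' 1%:M by move/(left_ideal_full idL').
have sBB' : (B <= B')%MS.
  apply/row_subP => i; rewrite -[row i B]vec_mxK.
  by apply/LB'/sLL'/LB; rewrite vec_mxK row_sub.
have := minL _ (ex_intro _ L' (ex_intro _ B' (And4 idL' L'1 LB' erefl))).
rewrite leq_sub2lE ?rank_leq_col // => leB'B.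
have sB'B : (B' <= B)%MS.
  by rewrite -(mxrank_leqif_sup sBB').2 eqn_leq mxrankS.
exact/LB/(submx_trans _ sB'B)/LB'.
Qed.

Lemma WA_k_gt0 k (d : 'I_k -> nat)
    (phi : forall i : 'I_k, 'M[algC]_n -> 'M[algC]_(d i)) :
  (0 < n)%N -> WA_decomp delta phi -> (0 < k)%N.
Proof.
case: k d phi => // d phi n_gt0 [_ [_ _ _ _ kerR]].
by case: (JRad_neq1 n_gt0); apply/(kerR _ Ralg1) => -[].
Qed.

Section Components.
Variables (k : nat) (d : 'I_k -> nat).
Variable phi : forall i : 'I_k, 'M[algC]_n -> 'M[algC]_(d i).
Hypothesis WA : WA_decomp delta phi.

Local Notation theta := (theta delta phi).
Local Notation Rnk_i := (Rnk_i delta phi).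
Local Notation RnkI := (RnkI delta phi).

Lemma phi_linear i : linear_on_Ralg (phi i).
Proof. by case: WA => _ [phiL _ _ _ _]; apply: phiL. Qed.

Lemma theta_cat i u v : theta i (u ++ v) = theta i u *m theta i v.
Proof.
by case: WA => _ [_ phiM _ _ _]; rewrite /Defs.theta rho_cat phiM ?Ralg_rho.
Qed.

Lemma theta_nil i : theta i [::] = 1%:M.
Proof. by case: WA => _ [_ _ phi1 _ _]; rewrite /Defs.theta rho_nil phi1. Qed.

Lemma theta_reset i u : is_reset delta u -> theta i u = 0.
Proof.
by move=> /rho_reset; rewrite /Defs.theta => ->; apply/linear_on_Ralg0/phi_linear.
Qed.

Lemma radical_wordP u : radical_word delta u <-> forall i, theta i u = 0.
Proof. by case: WA => _ [_ _ _ _ kerR]; rewrite /radical_word kerR ?Ralg_rho. Qed.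

Lemma phi_surj i (B : 'M[algC]_(d i)) : exists2 A, Ralg A & phi i A = B.
Proof.
case: WA => _ [_ _ _ surj _].
pose g j := if i =P j is ReflectT e then ecast j 'M[algC]_(d j) e B else 0.
have [A [RA phiA]] := surj g.
by exists A; rewrite // phiA /g; case: eqP => // e; rewrite eq_axiomK.
Qed.

Lemma theta_span i (V : lmodType algC) (F : 'M[algC]_(d i) -> V) :
  linear F -> (forall u, F (theta i u) = 0) -> forall X, F X = 0.
Proof.
move=> linF Ftheta X; have [A RA <-] := phi_surj X.
apply: (Ralg_span (F := fun A => F (phi i A))) => // c A1 A2 RA1 RA2.
by rewrite phi_linear // linF.
Qed.

Lemma theta_prime i (X Y : 'M[algC]_(d i)) :
  X != 0 -> Y != 0 -> exists b, X *m theta i b *m Y != 0.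
Proof.
move=> X0 Y0; have [B /eqP XBY] := mx_prime X0 Y0.
apply: NNPP => all0; apply: XBY.
apply: (theta_span (F := fun B => X *m B *m Y)) => [c P Q | u] /=.
  by rewrite mulmxDr mulmxDl -scalemxAr -scalemxAl.
by apply/eqP; apply: contraT => nz; case: all0; exists u.
Qed.

Lemma Rnk_i_le i w : (Rnk_i i (theta i w) <= rk w)%N.
Proof. by apply: natmin_le; exists w. Qed.

Lemma RnkI_le_rk i (J : 'M[algC]_(d i) -> Prop) w :
  J (theta i w) -> theta i w != 0 -> (RnkI i J <= rk w)%N.
Proof.
move=> Jw /eqP w0; apply: leq_trans (Rnk_i_le i w).
by apply: natmin_le; exists (theta i w).
Qed.

Lemma Rnk_i_attained i g : theta_monoid delta phi i g ->
  exists w, theta i w = g /\ Rnk_i i g = rk w.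
Proof.
case=> w0 <-.
have /natminP [w [wh rw]] :
  exists r, exists w, theta i w = theta i w0 /\ rk w = r by exists (rk w0), w0.
by exists w; rewrite rw.
Qed.

Lemma RnkI_attained i (J : 'M[algC]_(d i) -> Prop) : (exists g, J g /\ g <> 0) ->
  exists h, [/\ J h, h <> 0 & RnkI i J = Rnk_i i h].
Proof.
case=> g [Jg g0].
have /natminP [h [Jh h0 Rh]] :
  exists r, exists h, [/\ J h, h <> 0 & Rnk_i i h = r] by exists (Rnk_i i g), g.
by exists h; rewrite Rh.
Qed.

Section ZeroMinimalIdeal.
Variables (i : 'I_k) (J : 'M[algC]_(d i) -> Prop).
Hypothesis J_min : zero_minimal_ideal (theta_monoid delta phi i) J.

Lemma Fr_le_RnkI : (Fr delta <= RnkI i J)%N.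
Proof.
case: J_min => [[_ J_mon _] [g [Jg g0]] _].
have [h [Jh h0 ->]] := RnkI_attained (ex_intro _ g (conj Jg g0)).
have [w [wh ->]] := Rnk_i_attained (J_mon h Jh).
by apply: Fr_le_rk => /(theta_reset i); rewrite wh.
Qed.

Lemma ideal_word_through u : theta i u != 0 ->
  exists x y, J (theta i (x ++ u ++ y)) /\ theta i (x ++ u ++ y) != 0.
Proof.
move=> u0; case: J_min => [[_ J_mon J_ideal] [h [Jh /eqP h0]] _].
have [v vh] := J_mon h Jh.
have [b hbu] := theta_prime h0 u0.
have [c hbuch] := theta_prime hbu h0.
exists (v ++ b), (c ++ v).
have -> : theta i ((v ++ b) ++ u ++ c ++ v)
    = h *m theta i b *m theta i u *m theta i c *m h.
  by rewrite !theta_cat vh !mulmxA.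
split=> //.
have := J_ideal _ _ _ (ex_intro _ [::] erefl)
  (ex_intro _ (b ++ u ++ c ++ v) erefl) Jh.
by rewrite theta_nil mul1mx !theta_cat vh !mulmxA.
Qed.

End ZeroMinimalIdeal.

Lemma minRnk_le (I : forall i : 'I_k, 'M[algC]_(d i) -> Prop) i :
  (minRnk delta phi I <= RnkI i (I i))%N.
Proof. by apply: natmin_le; exists i. Qed.

Lemma minRnk_attained (I : forall i : 'I_k, 'M[algC]_(d i) -> Prop) :
  (0 < k)%N -> exists i, minRnk delta phi I = RnkI i (I i).
Proof.
move=> k_gt0.
have /natminP [i Ri] : exists r, exists i, RnkI i (I i) = r.
  by exists (RnkI _ (I (Ordinal k_gt0))), (Ordinal k_gt0).
by exists i; rewrite Ri.
Qed.

End Components.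

End Automaton.

Theorem mainTheorem2 (n : nat) (Sigma : finType)
    (delta : 'I_n.+1 -> Sigma -> 'I_n.+1)
    (k : nat) (d : 'I_k -> nat)
    (phi : forall i : 'I_k, 'M[algC]_n -> 'M[algC]_(d i))
    (I : forall i : 'I_k, 'M[algC]_(d i) -> Prop) :
  (0 < n)%N ->
  synchronizing delta ->
  WA_decomp delta phi ->
  (forall i, zero_minimal_ideal (theta_monoid delta phi i) (I i)) ->
  (Fr delta <= minRnk delta phi I)%N /\
  ((exists u, Fs delta u /\ ~ radical_word delta u) ->
     minRnk delta phi I = Fr delta).
Proof.
move=> n_gt0 _ WA I_min.
have Fr_le_minRnk : (Fr delta <= minRnk delta phi I)%N.
  have [i ->] := minRnk_attained delta phi I (WA_k_gt0 n_gt0 WA).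
  by apply: (Fr_le_RnkI WA).
split=> // -[u [Fs_u u_nrad]].
have [i u0] : exists i, theta delta phi i u != 0.
  apply: NNPP => u_rad; apply/u_nrad/(radical_wordP WA) => i.
  by apply/eqP; apply: contraT => u0; case: u_rad; exists i.
have [x [y [Ixuy xuy0]]] := ideal_word_through WA (I_min i) u0.
apply/eqP; rewrite eqn_leq Fr_le_minRnk andbT -Fs_u.
apply: leq_trans (minRnk_le delta phi I i) _.
exact: leq_trans (RnkI_le_rk Ixuy xuy0) (rk_infix delta x u y).
Qed.
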